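(* Let $a,b,q$ be complex numbers with $q\neq 0$. For every formal power series $F(z)\in\mathbb{C}[[z]]$ there is an expansion $$F(z)=\sum_{n=0}^{\infty}c_n\,z^{n}\frac{(az;q)_n}{(bz;q)_n},$$ with coefficients $c_n$ independent of $z$ given by $$c_n=[z^{n}]\Big\{F(z)\frac{(bz;q)_{n-1}}{(az;q)_n}\Big\}-a\sum_{k=0}^{n-1}B_{n-k,1}(a,b)\,q^{(n-k)k}\,[z^{k}]\Big\{F(z)\frac{(bz;q)_{k}}{(az;q)_{k+1}}\Big\},$$ where the numbers $B_{n,1}(a,b)$ ($n\ge 1$) are defined by the expansion in $\mathbb{C}[[z]]$ $$z=\sum_{n=1}^\infty B_{n,1}(a,b)\,z^n\frac{(az;q)_n}{(bz;q)_n}.$$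
   Context: For any integer $n$ (including negative $n$), $(x;q)_n=\prod_{j\ge0}(1-xq^j)/\prod_{j\ge 0}(1-xq^{n+j})$; thus $(x;q)_0=1$, $(x;q)_n=\prod_{j=0}^{n-1}(1-xq^j)$ for $n\ge1$, and $(x;q)_{-1}=1/(1-x/q)$. All such quotients with argument a multiple of $z$ are regarded as formal power series in $z$. For $f(z)=\sum_{n\ge0}a_nz^n\in\mathbb{C}[[z]]$, $[z^n]\{f(z)\}:=a_n$. Empty sums are $0$. The family $\{z^n(az;q)_n/(bz;q)_n\}_{n\ge0}$ is a basis (in the formal-series sense) of $\mathbb{C}[[z]]$, so the $B_{n,1}(a,b)$ are uniquely determined. *)

(* Formal power series in z over a field R are represented
   by their coefficient sequences  f : nat -> R  (f n = [z^n] f). *)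
From mathcomp Require Import all_boot all_order all_algebra.
Set Implicit Arguments. Unset Strict Implicit. Unset Printing Implicit Defensive.
Import Order.TTheory GRing.Theory Num.Theory.
Local Open Scope ring_scope.

Section FPS.
Variable R : fieldType.

Definition coefz (n : nat) (f : nat -> R) : R := f n.

Definition fps_one : nat -> R := fun n => (n == 0)%:R.
Definition fps_Xn (k : nat) : nat -> R := fun n => (n == k)%:R.
Definition fps_X : nat -> R := fps_Xn 1.

Definition fps_mul (f g : nat -> R) : nat -> R :=
  fun n => \sum_(i < n.+1) f i * g (n - i)%N.

(* first n+1 coefficients of the multiplicative inverse (needs f 0 != 0) *)
Fixpoint inv_upto (f : nat -> R) (n : nat) : seq R :=
  match n with
  | 0 => [:: (f 0%N)^-1]
  | m.+1 => let s := inv_upto f m in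
            rcons s (- (f 0%N)^-1 *
                     \sum_(1 <= i < m.+2) f i * nth 0 s (m.+1 - i)%N)
  end.

Definition fps_inv (f : nat -> R) : nat -> R := fun n => nth 0 (inv_upto f n) n.

Definition fps_div (f g : nat -> R) : nat -> R := fps_mul f (fps_inv g).

Definition fps_lin (c : R) : nat -> R :=
  fun n => if n == 0%N then 1 else if n == 1%N then - c else 0.

Definition fps_prod (s : seq (nat -> R)) : nat -> R := foldr fps_mul fps_one s.

(* (c z; q)_n for an integer n:
   n = m >= 0  :  prod_{j<m} (1 - c q^j z)
   n = -(m+1)  :  1 / prod_{j=0}^{m} (1 - c q^{-(j+1)} z)
   (this is  prod_{j>=0}(1 - x q^j) / prod_{j>=0}(1 - x q^{n+j})  with x = c z) *)
Definition qpoch (c q : R) (n : int) : nat -> R :=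
  match n with
  | Posz m => fps_prod [seq fps_lin (c * q ^+ j) | j <- iota 0 m]
  | Negz m => fps_inv (fps_prod [seq fps_lin (c * q ^- j.+1) | j <- iota 0 m.+1])
  end.

(* The formal series  sum_{n>=0} c_n z^n (a z;q)_n / (b z;q)_n ; the n-th term
   is O(z^n), so the coefficient of z^m only involves n <= m. *)
Definition qexpand (c : nat -> R) (a b q : R) : nat -> R :=
  fun m => \sum_(n < m.+1)
     c n * fps_mul (fps_Xn n) (fps_div (qpoch a q (Posz n)) (qpoch b q (Posz n))) m.

End FPS.

(* Write phi_n = z^n (az;q)_n/(bz;q)_n and psi_k = (bz;q)_k/(az;q)_(k+1).  Since
   phi_n = z^n + O(z^(n+1)), every series is a combination of the phi_n, and it
   suffices to check that the functional c_n of the statement satisfies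
   c_n(phi_j) = [j == n].  For j < n,
   the identity phi_j psi_(j+i) = z^j psi_i(q^j z) turns both terms of c_n(phi_j)
   into coefficients [z^m] psi_k; they cancel because of the symmetry
   [z^N] psi_M = a^(N-M) [z^M] psi_N (M <= N), which follows from two first
   order recurrences of psi_k, combined with the expansion z = sum B_m phi_m. *)

From HB Require Import structures.
From mathcomp Require Import all_boot all_order all_algebra.
From mathcomp Require Import boolp.
From mathcomp Require Import ring zify.
Set Implicit Arguments. Unset Strict Implicit. Unset Printing Implicit Defensive.
Import Order.TTheory GRing.Theory Num.Theory.
Local Open Scope ring_scope.

Section FormalPowerSeries.
Variable R : fieldType.

Definition fps := nat -> R.
HB.instance Definition _ := Choice.on fps.

Definition fps_zero : fps := fun=> 0.
Definition fps_opp (f : fps) : fps := fun n => - f n.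
Definition fps_add (f g : fps) : fps := fun n => f n + g n.

Lemma fps_addA : associative fps_add.
Proof. by move=> f g h; apply: funext => n; rewrite /fps_add addrA. Qed.

Lemma fps_addC : commutative fps_add.
Proof. by move=> f g; apply: funext => n; rewrite /fps_add addrC. Qed.

Lemma fps_add0 : left_id fps_zero fps_add.
Proof. by move=> f; apply: funext => n; rewrite /fps_add add0r. Qed.

Lemma fps_addN : left_inverse fps_zero fps_opp fps_add.
Proof. by move=> f; apply: funext => n; rewrite /fps_add addNr. Qed.

HB.instance Definition _ :=
  GRing.isZmodule.Build fps fps_addA fps_addC fps_add0 fps_addN.

Definition fps_trunc (n : nat) (f : fps) : {poly R} := \poly_(i < n.+1) f i.

Lemma coef_fps_trunc n f i : (i <= n)%N -> (fps_trunc n f)`_i = f i.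
Proof. by move=> le_in; rewrite coef_poly ltnS le_in. Qed.

Lemma eq_coefM_upto (p p' r r' : {poly R}) n :
  (forall i, (i <= n)%N -> p`_i = p'`_i) ->
  (forall i, (i <= n)%N -> r`_i = r'`_i) -> (p * r)`_n = (p' * r')`_n.
Proof.
move=> epp' err'; rewrite !coefM; apply: eq_bigr => i _.
by rewrite epp' ?err' ?leq_subr // -ltnS.
Qed.

Lemma fps_mul_trunc (f g : fps) n :
  fps_mul f g n = (fps_trunc n f * fps_trunc n g)`_n.
Proof.
rewrite coefM; apply: eq_bigr => i _.
by rewrite !coef_fps_trunc // ?leq_subr // -ltnS.
Qed.

Lemma fps_trunc_mul (f g : fps) n i : (i <= n)%N ->
  (fps_trunc n (fps_mul f g))`_i = (fps_trunc n f * fps_trunc n g)`_i.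
Proof.
move=> le_in; rewrite coef_fps_trunc // fps_mul_trunc.
by apply: eq_coefM_upto => j le_ji; rewrite !coef_fps_trunc // (leq_trans le_ji).
Qed.

Lemma fps_mulA : associative (@fps_mul R).
Proof.
move=> f g h; apply: funext => n; rewrite !fps_mul_trunc.
transitivity ((fps_trunc n f * (fps_trunc n g * fps_trunc n h))`_n).
  by apply: eq_coefM_upto => // i /fps_trunc_mul ->.
by rewrite mulrA; apply: eq_coefM_upto => // i /fps_trunc_mul ->.
Qed.

Lemma fps_mulC : commutative (@fps_mul R).
Proof. by move=> f g; apply: funext => n; rewrite !fps_mul_trunc mulrC. Qed.

Lemma fps_mul1 : left_id (@fps_one R) (@fps_mul R).
Proof.
move=> f; apply: funext => n; rewrite /fps_mul big_ord_recl /= mul1r subn0.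
by rewrite big1 ?addr0 // => i _; rewrite mul0r.
Qed.

Lemma fps_mulDl : left_distributive (@fps_mul R) fps_add.
Proof.
move=> f g h; apply: funext => n; rewrite /fps_mul /fps_add -big_split /=.
by apply: eq_bigr => i _; rewrite mulrDl.
Qed.

Lemma fps_one_neq0 : (fps_one R : fps) != fps_zero.
Proof. by apply/eqP => /(congr1 (fun f : fps => f 0%N))/eqP; rewrite oner_eq0. Qed.

HB.instance Definition _ := GRing.Zmodule_isComNzRing.Build fps
  fps_mulA fps_mulC fps_mul1 fps_mulDl fps_one_neq0.

Lemma fps_coefD (f g : fps) n : (f + g) n = f n + g n. Proof. by []. Qed.

Lemma fps_coef1 n : (1 : fps) n = (n == 0%N)%:R. Proof. by []. Qed.

Lemma fps_coefM (f g : fps) n : (f * g) n = \sum_(i < n.+1) f i * g (n - i)%N.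
Proof. by []. Qed.

Lemma fps_coef_sum I (r : seq I) (P : pred I) (F : I -> fps) n :
  (\sum_(i <- r | P i) F i) n = \sum_(i <- r | P i) F i n.
Proof. exact: (big_morph (fun f : fps => f n)). Qed.

Lemma fps_coefM0 (f g : fps) : (f * g) 0%N = f 0%N * g 0%N.
Proof. by rewrite fps_coefM big_ord1 subn0. Qed.

Lemma fps_coefMl_eq (f g h : fps) n :
  (forall i, (i <= n)%N -> f i = g i) -> (f * h) n = (g * h) n.
Proof. by move=> efg; apply: eq_bigr => i _; rewrite efg // -ltnS. Qed.

Definition fpsC (c : R) : fps := fun n => if n == 0%N then c else 0.

Lemma fps_coefCM c (f : fps) n : (fpsC c * f) n = c * f n.
Proof.
rewrite fps_coefM big_ord_recl /= subn0 big1 ?addr0 // => i _.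
by rewrite mul0r.
Qed.

Definition Xn (k : nat) : fps := fps_Xn R k.

Lemma fps_coefXnM k (g : fps) n :
  (Xn k * g) n = if (k <= n)%N then g (n - k)%N else 0.
Proof.
rewrite fps_coefM; case: leqP => [le_kn|lt_nk].
  rewrite (bigD1 (Ordinal (le_kn : (k < n.+1)%N))) //= /Xn /fps_Xn eqxx mul1r.
  rewrite big1 ?addr0 // => i ne_ik; case: eqP => [e_ik|]; last by rewrite mul0r.
  by case/eqP: ne_ik; apply: val_inj.
rewrite big1 // => i _; rewrite /Xn /fps_Xn; case: eqP => [e_ik|]; last by rewrite mul0r.
by have := ltn_ord i; rewrite e_ik ltnS leqNgt lt_nk.
Qed.

Lemma size_inv_upto (f : fps) n : size (inv_upto f n) = n.+1.
Proof. by elim: n => //= n IHn; rewrite size_rcons IHn. Qed.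

Lemma nth_inv_upto (f : fps) n i :
  (i <= n)%N -> nth 0 (inv_upto f n) i = fps_inv f i.
Proof.
elim: n => [|n IHn]; first by rewrite leqn0 => /eqP ->.
rewrite leq_eqVlt => /orP [/eqP -> //| lt_in].
by rewrite /= nth_rcons size_inv_upto lt_in IHn.
Qed.

Lemma fps_invS (f : fps) n : fps_inv f n.+1 =
  - (f 0%N)^-1 * \sum_(1 <= i < n.+2) f i * fps_inv f (n.+1 - i)%N.
Proof.
rewrite {1}/fps_inv /= nth_rcons size_inv_upto ltnn eqxx; congr (_ * _).
rewrite big_nat_cond [RHS]big_nat_cond; apply: eq_bigr => i /andP[/andP[i_gt0 i_le] _].
by rewrite nth_inv_upto //; lia.
Qed.

Definition fpsV (f : fps) : fps := fps_inv f.

Lemma fpsV_coef0 (f : fps) : fpsV f 0%N = (f 0%N)^-1. Proof. by []. Qed.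

Lemma fps_mulVf (f : fps) : f 0%N != 0 -> fpsV f * f = 1.
Proof.
move=> f0_neq0; apply: funext => n; rewrite mulrC fps_coefM fps_coef1.
case: n => [|n]; first by rewrite big_ord1 subn0 mulfV.
rewrite big_ord_recl subn0 /fpsV fps_invS mulrA mulrN mulfV // mulN1r.
by rewrite big_add1 /= big_mkord addNr.
Qed.

Lemma fpsV_unique (f g : fps) : f 0%N != 0 -> g * f = 1 -> g = fpsV f.
Proof.
by move=> f0_neq0 gf1; rewrite -[g]mulr1 -(fps_mulVf f0_neq0) mulrCA gf1 mulr1.
Qed.

Lemma fpsVM (f g : fps) : f 0%N != 0 -> g 0%N != 0 ->
  fpsV (f * g) = fpsV f * fpsV g.
Proof.
move=> f0_neq0 g0_neq0; symmetry; apply: fpsV_unique.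
  by rewrite fps_coefM0 mulf_neq0.
by rewrite mulrACA !fps_mulVf // mulr1.
Qed.

Definition lin (c : R) : fps := fps_lin c.

Lemma lin_coef0_neq0 c : lin c 0%N != 0. Proof. exact: oner_neq0. Qed.

Lemma fps_coef_linM c (f : fps) n : (lin c * f) n.+1 = f n.+1 - c * f n.
Proof.
rewrite fps_coefM !big_ord_recl big1 => [|i _]; last by rewrite mul0r.
by rewrite /= mul1r subn0 addr0 subSS subn0 mulNr.
Qed.

Lemma fpsV_lin c : fpsV (lin c) = fun n => c ^+ n.
Proof.
symmetry; apply: fpsV_unique; first exact: lin_coef0_neq0.
apply: funext => -[|n]; rewrite mulrC; first by rewrite fps_coefM0 mul1r.
by rewrite fps_coef_linM exprS subrr.
Qed.

Lemma fps_prod_cons (f : fps) s : fps_prod (f :: s) = f * fps_prod s.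
Proof. by []. Qed.

Lemma fps_prod_cat (s1 s2 : seq fps) :
  fps_prod (s1 ++ s2) = (fps_prod s1 : fps) * fps_prod s2.
Proof.
elim: s1 => [|f s1 IHs1]; first by rewrite mul1r.
by rewrite cat_cons !fps_prod_cons IHs1 mulrA.
Qed.

Lemma fps_prod_lin_coef0 (s : seq R) : fps_prod [seq lin c | c <- s] 0%N = 1.
Proof.
elim: s => [|c s IHs] //.
by rewrite map_cons fps_prod_cons fps_coefM0 IHs mulr1.
Qed.

Definition dilate (t : R) (f : fps) : fps := fun n => t ^+ n * f n.

Lemma dilate1 t : dilate t 1 = 1.
Proof. by apply: funext => -[|n]; rewrite /dilate fps_coef1 ?mul1r ?mulr0. Qed.

Lemma dilateM t (f g : fps) : dilate t (f * g) = dilate t f * dilate t g.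
Proof.
apply: funext => n; rewrite /dilate !fps_coefM big_distrr; apply: eq_bigr => i _.
by rewrite mulrACA -exprD subnKC // -ltnS.
Qed.

Lemma dilate_lin t c : dilate t (lin c) = lin (c * t).
Proof.
apply: funext => -[|[|n]]; rewrite /dilate /lin /fps_lin /=.
- by rewrite mul1r.
- by rewrite mulrN mulrC.
- by rewrite mulr0.
Qed.

Lemma dilate_prod t (s : seq fps) : dilate t (fps_prod s) = fps_prod (map (dilate t) s).
Proof.
elim: s => [|f s IHs]; first exact: dilate1.
by rewrite map_cons !fps_prod_cons dilateM IHs.
Qed.

Lemma dilateV t (f : fps) : f 0%N != 0 -> dilate t (fpsV f) = fpsV (dilate t f).
Proof.
move=> f0_neq0; apply: fpsV_unique; first by rewrite /dilate mul1r.
by rewrite -dilateM fps_mulVf // dilate1.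
Qed.

Section QPochhammer.
Variable q : R.

Definition poch (c : R) (k : nat) : fps := qpoch c q (Posz k).

Lemma pochE c k : poch c k = fps_prod [seq lin (c * q ^+ j) | j <- iota 0 k].
Proof. by []. Qed.

Lemma poch_coef0 c k : poch c k 0%N = 1.
Proof. by rewrite pochE (map_comp lin) fps_prod_lin_coef0. Qed.

Lemma poch_coef0_neq0 c k : poch c k 0%N != 0.
Proof. by rewrite poch_coef0 oner_neq0. Qed.

Lemma pochD c j k : poch c (j + k) = poch c j * poch (c * q ^+ j) k.
Proof.
rewrite !pochE iotaD map_cat fps_prod_cat add0n; congr (_ * _).
rewrite -[j in iota j k]addn0 iotaDl -map_comp; congr fps_prod.
by apply: eq_map => i /=; rewrite exprD mulrA.
Qed.

Lemma poch1 c : poch c 1 = lin c.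
Proof. by rewrite pochE fps_prod_cons expr0 !mulr1. Qed.

Lemma pochS c k : poch c k.+1 = poch c k * lin (c * q ^+ k).
Proof. by rewrite -addn1 pochD poch1. Qed.

Lemma pochSl c k : poch c k.+1 = lin c * poch (c * q) k.
Proof. by rewrite -add1n pochD poch1 expr1. Qed.

Lemma dilate_poch t c k : dilate t (poch c k) = poch (c * t) k.
Proof.
rewrite !pochE dilate_prod -map_comp; congr fps_prod.
by apply: eq_map => j /=; rewrite dilate_lin mulrAC.
Qed.

Definition poch_pred (c : R) (n : nat) : fps := qpoch c q (n%:Z - 1).

Lemma poch_predS c n : poch_pred c n.+1 = poch c n.
Proof. by rewrite /poch_pred -addn1 PoszD addrK. Qed.

Lemma poch_pred_coef0 c n : poch_pred c n 0%N = 1.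
Proof.
case: n => [|n]; last by rewrite poch_predS poch_coef0.
by rewrite [LHS](_ : _ = ((lin (c / q) * 1) 0%N)^-1) // fps_coefM0 mulr1 invr1.
Qed.

Section Psi.
Variables a b : R.

Definition psi (k : nat) : fps := poch b k * fpsV (poch a k.+1).

Lemma psi0_coef n : psi 0 n = a ^+ n.
Proof. by rewrite /psi mul1r poch1 fpsV_lin. Qed.

Lemma psi_coef0 k : psi k 0%N = 1.
Proof. by rewrite /psi fps_coefM0 fpsV_coef0 !poch_coef0 invr1 mulr1. Qed.

Lemma lin_psiS k : lin (a * q ^+ k.+1) * psi k.+1 = lin (b * q ^+ k) * psi k.
Proof.
rewrite /psi (pochS b) (pochS a k.+1) fpsVM ?poch_coef0_neq0 ?lin_coef0_neq0 //.
by rewrite -[RHS]mulr1 -(fps_mulVf (lin_coef0_neq0 (a * q ^+ k.+1))); ring.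
Qed.

Lemma lin_psiS_dilate k : lin a * psi k.+1 = lin b * dilate q (psi k).
Proof.
rewrite /psi (pochSl b) (pochSl a k.+1) fpsVM ?poch_coef0_neq0 ?lin_coef0_neq0 //.
rewrite dilateM dilateV ?poch_coef0_neq0 // !dilate_poch.
by rewrite -[RHS]mulr1 -(fps_mulVf (lin_coef0_neq0 a)); ring.
Qed.

Lemma psiS_coefS k n : psi k.+1 n.+1 - a * q ^+ k.+1 * psi k.+1 n =
  psi k n.+1 - b * q ^+ k * psi k n.
Proof. by rewrite -!fps_coef_linM lin_psiS. Qed.

Lemma psiS_coefS_dilate k n : psi k.+1 n.+1 - a * psi k.+1 n =
  q ^+ n.+1 * psi k n.+1 - b * (q ^+ n * psi k n).
Proof. by rewrite -[LHS]fps_coef_linM lin_psiS_dilate fps_coef_linM. Qed.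

Lemma psi_coef_sym M N : (M <= N)%N -> psi M N = a ^+ (N - M) * psi N M.
Proof.
elim: M N => [|M IHM] N le_MN; first by rewrite psi0_coef psi_coef0 subn0 mulr1.
elim: N le_MN => [//|N IHN] le_MN.
have le_MN' : (M <= N)%N by [].
have a_psi : a * psi M.+1 N = a ^+ (N - M) * psi N M.+1.
  case: (ltngtP M N) le_MN' => // [lt_MN|<-] _.
    by rewrite IHN // mulrA -exprS subnSK.
  by rewrite subnn mul1r (IHM M.+1) // subSn // subnn expr1.
rewrite -[psi M.+1 N.+1](subrK (a * psi M.+1 N)) psiS_coefS_dilate a_psi.
rewrite -[psi N.+1 M.+1](subrK (a * q ^+ N.+1 * psi N.+1 M)) psiS_coefS.
rewrite (IHM N.+1 (leqW le_MN')) (IHM N le_MN') subSS subSn // (exprS a (N - M)).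
ring.
Qed.

Definition phi (j : nat) : fps := Xn j * (poch a j * fpsV (poch b j)).

Lemma phiM_coef_lt j (f : fps) n : (n < j)%N -> (phi j * f) n = 0.
Proof. by move=> lt_nj; rewrite /phi -mulrA fps_coefXnM leqNgt lt_nj. Qed.

Lemma phi_coef_lt j n : (n < j)%N -> phi j n = 0.
Proof. by move=> lt_nj; rewrite -[phi j]mulr1 phiM_coef_lt. Qed.

Lemma phi_coefnn j : phi j j = 1.
Proof.
by rewrite /phi fps_coefXnM leqnn subnn fps_coefM0 fpsV_coef0 !poch_coef0 invr1 mulr1.
Qed.

Lemma phi_psi j i : phi j * psi (j + i) = Xn j * dilate (q ^+ j) (psi i).
Proof.
rewrite /phi /psi dilateM dilateV ?poch_coef0_neq0 // !dilate_poch -addnS !pochD.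
rewrite fpsVM ?poch_coef0_neq0 //.
rewrite -[RHS]mulr1 -(fps_mulVf (poch_coef0_neq0 a j)).
by rewrite -[RHS]mulr1 -(fps_mulVf (poch_coef0_neq0 b j)); ring.
Qed.

Lemma phi_psi_coef j i : (phi j * psi (j + i)) (j + i)%N = q ^+ (j * i) * psi i i.
Proof. by rewrite phi_psi fps_coefXnM leq_addr addKn /dilate -exprM. Qed.

Lemma phi_sum_exists (f : fps) N : exists e : nat -> R,
  forall i, (i < N)%N -> f i = (\sum_(j < N) fpsC (e j) * phi j) i.
Proof.
elim: N => [|N [e fE]]; first by exists (fun=> 0).
set v := f N - (\sum_(j < N) fpsC (e j) * phi j) N.
exists (fun j => if j == N then v else e j) => i; rewrite ltnS => le_iN.
rewrite big_ord_recr /= eqxx fps_coefD fps_coefCM.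
under eq_bigr => j _ do rewrite /= (ltn_eqF (ltn_ord j)).
case: (ltngtP i N) le_iN => // [lt_iN|->] _.
  by rewrite phi_coef_lt // mulr0 addr0 fE.
by rewrite phi_coefnn mulr1 /v addrC subrK.
Qed.

Lemma fps_coef_phi_sumM (e : nat -> R) N (f : fps) n :
  ((\sum_(j < N) fpsC (e j) * phi j) * f) n = \sum_(j < N) e j * (phi j * f) n.
Proof.
rewrite big_distrl fps_coef_sum; apply: eq_bigr => j _ /=.
by rewrite -(mulrA (fpsC (e j))) fps_coefCM.
Qed.

Section Expansion.
Variable B : nat -> R.

Definition expansion_coef (f : fps) (n : nat) : R :=
  (f * (poch_pred b n * fpsV (poch a n))) n
  - a * \sum_(k < n) B (n - k) * q ^+ ((n - k) * k) * (f * psi k) k.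

Lemma expansion_coef_eq (f g : fps) n :
  (forall i, (i <= n)%N -> f i = g i) -> expansion_coef f n = expansion_coef g n.
Proof.
move=> efg; rewrite /expansion_coef (fps_coefMl_eq _ efg).
congr (_ - _ * _); apply: eq_bigr => k _; congr (_ * _).
by apply: fps_coefMl_eq => i le_ik; apply: efg; rewrite (leq_trans le_ik) // ltnW.
Qed.

Lemma expansion_coef_phi_sum (e : nat -> R) N n :
  expansion_coef (\sum_(j < N) fpsC (e j) * phi j) n =
  \sum_(j < N) e j * expansion_coef (phi j) n.
Proof.
rewrite /expansion_coef fps_coef_phi_sumM.
under [X in a * X]eq_bigr do rewrite fps_coef_phi_sumM.
under [RHS]eq_bigr do rewrite mulrBr.
rewrite sumrB; congr (_ - _).
transitivity (\sum_(k < n) \sum_(j < N)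
    a * (B (n - k) * q ^+ ((n - k) * k)) * (e j * (phi j * psi k) k)).
  by rewrite big_distrr; apply: eq_bigr => k _ /=; rewrite mulrA big_distrr.
rewrite exchange_big; apply: eq_bigr => j _ /=.
rewrite mulrCA !big_distrr /=; apply: eq_bigr => k _ /=; ring.
Qed.

Lemma expansion_coef_phi_gt j n : (n < j)%N -> expansion_coef (phi j) n = 0.
Proof.
move=> lt_nj; rewrite /expansion_coef phiM_coef_lt // big1 ?mulr0 ?subr0 // => k _.
by rewrite phiM_coef_lt ?mulr0 // (ltn_trans _ lt_nj).
Qed.

Lemma expansion_coef_phi_diag j : expansion_coef (phi j) j = 1.
Proof.
rewrite /expansion_coef big1 ?mulr0 ?subr0 => [|k _]; last by rewrite phiM_coef_lt ?mulr0.
have -> : phi j * (poch_pred b j * fpsV (poch a j)) =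
  Xn j * ((fpsV (poch a j) * poch a j) * (fpsV (poch b j) * poch_pred b j)).
  by rewrite /phi; ring.
rewrite fps_mulVf ?poch_coef0_neq0 // mul1r fps_coefXnM leqnn subnn fps_coefM0.
by rewrite fpsV_coef0 poch_coef0 poch_pred_coef0 invr1 mulr1.
Qed.

Hypothesis X_expansion : forall m,
  fps_X R m = qexpand (fun n => if n == 0%N then 0 else B n) a b q m.

Lemma X_coef_phi_sum N i : (i <= N)%N ->
  Xn 1 i = (\sum_(m < N.+1) fpsC (if m == 0%N :> nat then 0 else B m) * phi m) i.
Proof.
move=> le_iN; rewrite [LHS]X_expansion /qexpand fps_coef_sum.
rewrite (big_ord_widen N.+1 (fun m => (if m == 0%N then 0 else B m) * phi m i)) //.
rewrite big_mkcond; apply: eq_bigr => m _; rewrite fps_coefCM.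
by case: ltnP => // lt_im; rewrite phi_coef_lt ?mulr0.
Qed.

(* From the symmetry, [z^(d+1)] psi_d = a [z^(d+1)] (z psi_(d+1)); expanding z
   in the phi_m, each phi_m psi_(d+1) contributes a diagonal coefficient. *)
Lemma psi_coef_succ d : psi d d.+1 =
  a * \sum_(i < d.+1) B (d.+1 - i) * q ^+ ((d.+1 - i) * i) * psi i i.
Proof.
rewrite (psi_coef_sym (leqnSn d)) subSnn expr1; congr (_ * _).
have -> : psi d.+1 d = (Xn 1 * psi d.+1) d.+1 by rewrite fps_coefXnM ltn0Sn subn1.
rewrite (fps_coefMl_eq _ (X_coef_phi_sum (N := d.+1))).
rewrite (fps_coef_phi_sumM (fun m => if m == 0%N then 0 else B m)).
rewrite big_ord_recl /= mul0r add0r (reindex_inj rev_ord_inj) /=.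
apply: eq_bigr => i _; rewrite /bump /= add1n subSS.
have le_id : (i <= d)%N by rewrite -ltnS.
have := phi_psi_coef (d - i).+1 i; rewrite (_ : (_ + i = d.+1)%N); last lia.
by move=> ->; rewrite subSn // mulrA.
Qed.

Lemma expansion_coef_phi_lt j d : expansion_coef (phi j) (j + d.+1) = 0.
Proof.
rewrite /expansion_coef big_split_ord /= big1 ?add0r => [|k _]; last first.
  by rewrite phiM_coef_lt ?mulr0.
under eq_bigr do rewrite phi_psi_coef subnDl.
rewrite addnS poch_predS -/(psi (j + d)) phi_psi fps_coefXnM -addnS leq_addr addKn.
rewrite /dilate psi_coef_succ mulrCA big_distrr /=.
apply/eqP; rewrite subr_eq0; apply/eqP; congr (_ * _); apply: eq_bigr => i _.
have le_id : (i <= d.+1)%N by apply: ltnW.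
rewrite -!exprM; set e := (d.+1 - i)%N.
have -> : (j * d.+1 = e * j + j * i)%N by rewrite /e; nia.
by rewrite mulnDr !exprD; ring.
Qed.

Lemma expansion_coef_phi j n : expansion_coef (phi j) n = (j == n)%:R.
Proof.
case: (ltngtP n j) => [lt_nj|lt_jn|->]; last exact: expansion_coef_phi_diag.
  by rewrite expansion_coef_phi_gt.
by rewrite -(subnKC lt_jn) addSnnS expansion_coef_phi_lt.
Qed.

Lemma phi_expansion (f : fps) m :
  f m = \sum_(n < m.+1) expansion_coef f n * phi n m.
Proof.
have [e fE] := phi_sum_exists f m.+1.
set g := \sum_(j < m.+1) fpsC (e j) * phi j.
have efg i : (i <= m)%N -> f i = g i by move=> ?; apply: fE.
rewrite efg // {1}/g fps_coef_sum; apply: eq_bigr => n _; rewrite fps_coefCM.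
rewrite (expansion_coef_eq (g := g)); last first.
  by move=> i le_in; apply: efg; rewrite (leq_trans le_in) // -ltnS.
rewrite expansion_coef_phi_sum (bigD1 n) //= expansion_coef_phi eqxx mulr1.
rewrite big1 ?addr0 // => j ne_jn.
by rewrite expansion_coef_phi val_eqE (negbTE ne_jn) mulr0.
Qed.

End Expansion.
End Psi.
End QPochhammer.
End FormalPowerSeries.

Theorem theorem1p1 (R : numClosedFieldType) (a b q : R) (F B : nat -> R) :
  q != 0 ->
  (* B n = B_{n,1}(a,b) for n >= 1:  z = sum_{n>=1} B_{n,1} z^n (az;q)_n/(bz;q)_n *)
  (forall m, fps_X R m = qexpand (fun n => if n == 0%N then 0 else B n) a b q m) ->
  forall m, F m =
    qexpand (fun n =>
        coefz n (fps_div (fps_mul F (qpoch b q (n%:Z - 1))) (qpoch a q n%:Z))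
        - a * \sum_(k < n) B (n - k)%N * q ^+ ((n - k) * k)
              * coefz k (fps_div (fps_mul F (qpoch b q k%:Z)) (qpoch a q k.+1%:Z)))
      a b q m.
Proof.
move=> _ X_expansion m.
rewrite (phi_expansion X_expansion F m); apply: eq_bigr => n _; congr (_ * _).
rewrite /expansion_coef /coefz mulrA; congr (_ - _ * _).
by apply: eq_bigr => k _; rewrite /psi mulrA.
Qed.
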